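(* Let $n\ge 4$, and let $u,v$ be two vertices of the cycle $C_n$ that are not adjacent in $C_n$. Then $\mathscr{Z}^{\rm TAR}(C_n)=\mathscr{Z}^{\rm TAR}(C_n+uv)$; in fact $C_n$ and $C_n+uv$ have exactly the same zero forcing sets.
   Context: $C_n+uv$ is the graph on $V(C_n)$ with edge set $E(C_n)\cup\{uv\}$. Zero forcing: starting with a set $S$ of blue vertices, a blue vertex $v$ may turn blue a white vertex $w$ if $w$ is the only white neighbor of $v$; $S$ is a zero forcing set if repeated application colors all vertices blue. $\mathscr{Z}^{\rm TAR}(G)$ has vertices the zero forcing sets of $G$, two adjacent iff their symmetric difference has size 1. *)

From mathcomp Require Import all_boot.
Set Implicit Arguments. Unset Strict Implicit. Unset Printing Implicit Defensive.

Definition cycle_rel (n : nat) : rel 'I_n :=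
  fun i j => (val j == (val i).+1 %% n) || (val i == (val j).+1 %% n).

Definition add_edge (T : eqType) (e : rel T) (u v : T) : rel T :=
  fun x y => [|| e x y, (x == u) && (y == v) | (x == v) && (y == u)].

(* Zero forcing: B is reachable from S by a sequence of color-change steps,
   where a blue v turns blue a white w when w is the only white neighbor of v. *)
Inductive zf_reach (T : finType) (e : rel T) (S : {set T}) : {set T} -> Prop :=
| zf_start : zf_reach e S S
| zf_force : forall (B : {set T}) (v w : T),
    zf_reach e S B -> v \in B -> w \notin B -> e v w ->
    (forall x, e v x -> x != w -> x \in B) ->
    zf_reach e S (w |: B).

Definition zero_forcing_set (T : finType) (e : rel T) (S : {set T}) : Prop :=
  zf_reach e S [set: T].

Definition ZTAR_vertex (T : finType) (e : rel T) (S : {set T}) : Prop :=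
  zero_forcing_set e S.

Definition ZTAR_adj (T : finType) (e : rel T) (S1 S2 : {set T}) : Prop :=
  [/\ zero_forcing_set e S1, zero_forcing_set e S2 &
      #|(S1 :\: S2) :|: (S2 :\: S1)| = 1].

From mathcomp Require Import all_boot zify.
Set Implicit Arguments. Unset Strict Implicit. Unset Printing Implicit Defensive.

(* For n >= 3 and any graph e between C_n and C_n + uv, a set S is zero
   forcing iff it contains both ends of some cycle edge.  The first force needs
   a blue vertex with a single white neighbour, so one of its two cycle
   neighbours is blue.  Conversely, let B contain a cycle edge but not every
   vertex.  Walking forward from that edge to a white vertex gives blue y, y+1
   with y+2 white; walking on to the edge gives white p with p+1, p+2 blue.
   Then y+1 can force y+2 and p+1 can force p along the cycle, and since
   y+1 <> p+1 the extra edge uv can block at most one of them.  Repeating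
   such forces colours everything. *)

Definition forces (T : finType) (e : rel T) (B : {set T}) (x w : T) :=
  [/\ x \in B, w \notin B, e x w & forall y, e x y -> y != w -> y \in B].

Section Forcing.
Variables (T : finType) (e : rel T).

Lemma zf_reach_first_force S B :
  zf_reach e S B -> B = S \/ exists x w, forces e S x w.
Proof.
elim=> [|B' x w _ IH xB wB exw others]; first by left.
by right; case: IH => [<-|//]; exists x, w.
Qed.

Lemma zero_forcing_set_of_invariant (P : {set T} -> Prop) S :
  (forall B, P B -> B != setT -> exists x w, forces e B x w /\ P (w |: B)) ->
  P S -> zero_forcing_set e S.
Proof.
move=> step PS; suff: forall B, zf_reach e S B -> P B -> zf_reach e S setT.
  by apply; first exact: zf_start.
move=> B; have [m] := ubnP #|~: B|; elim: m B => // m IH B ltBm reachB PB.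
have [<- //|/(step _ PB)[x [w [[xB wB exw others] Pw]]]] := eqVneq B setT.
apply: IH Pw; last exact: zf_force reachB xB wB exw others.
by rewrite setCU setIC -setDE; move: ltBm; rewrite (cardsD1 w) inE wB.
Qed.

Definition partner_in (u v : T) (B : {set T}) (x : T) :=
  ((x == u) ==> (v \in B)) && ((x == v) ==> (u \in B)).

Lemma partner_in_either u v (B : {set T}) x1 x2 :
  x1 \in B -> x2 \in B -> x1 != x2 -> partner_in u v B x1 || partner_in u v B x2.
Proof.
move=> x1B x2B x12; apply/norP; rewrite /partner_in !negb_and !negb_imply.
case=> /orP[]/andP[/eqP x1E nB1] /orP[]/andP[/eqP x2E nB2];
  by [rewrite x1E x2E eqxx in x12 | rewrite -x2E x2B in nB1].
Qed.

Lemma forces_add_edge (g : rel T) u v B x w :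
  subrel g e -> subrel e (add_edge g u v) -> partner_in u v B x ->
  forces g B x w -> forces e B x w.
Proof.
move=> sub_ge sub_eg /andP[/implyP xuv /implyP xvu] [xB wB gxw others].
split=> // [|y /sub_eg /or3P[gxy|/andP[xu /eqP->]|/andP[xv /eqP->]] yw].
- exact: sub_ge.
- exact: others.
- exact: xuv.
- exact: xvu.
Qed.

End Forcing.

Lemma fconnect_exit (T : finType) (f : T -> T) (P : pred T) x z :
  fconnect f x z -> P x -> ~~ P z -> exists2 y, P y & ~~ P (f y).
Proof.
move=> /iter_findex <- Px; elim: (findex f x z) => [|m IH]; first by rewrite Px.
rewrite iterS => nPm1; have [Pm|nPm] := boolP (P (iter m f x)).
  by exists (iter m f x).
exact: IH.
Qed.

Section CycleOrder.
Variable n : nat.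
Implicit Types x y z : 'I_n.

Lemma val_iter_ordS x m : val (iter m (@ordS n) x) = (x + m) %% n.
Proof.
elim: m => [|m IH] /=; first by rewrite addn0 modn_small.
by rewrite IH addnS -addn1 modnDml addn1.
Qed.

Lemma fconnect_ordS x z : fconnect (@ordS n) x z.
Proof.
have -> : z = iter (z + (n - x)) (@ordS n) x.
  apply: val_inj; rewrite val_iter_ordS addnCA subnKC ?modnDr ?modn_small //.
  exact: ltnW.
exact: fconnect_iter.
Qed.

Lemma ordS_neq_ord_pred x : 2 < n -> ordS x != ord_pred x.
Proof.
move=> n_gt2; rewrite -(inj_eq (@ordS_inj n)) ord_predK -val_eqE.
have /= -> := val_iter_ordS x 2; have lt_xn := ltn_ord x.
have [lt_x2n|le_nx2] := ltnP (x + 2) n.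
  by rewrite modn_small // -{2}[val x]addn0 eqn_add2l.
by rewrite -(subnK le_nx2) modnDr modn_small; lia.
Qed.

Lemma cycle_relE x y : cycle_rel x y = (y == ordS x) || (y == ord_pred x).
Proof.
by rewrite -[y == ord_pred x](inj_eq (@ordS_inj n)) ord_predK [ordS y == x]eq_sym.
Qed.

Lemma forces_cycle_ordS (B : {set 'I_n}) x :
  x \in B -> ord_pred x \in B -> ordS x \notin B -> forces (@cycle_rel n) B x (ordS x).
Proof.
move=> xB pxB sxB; split=> //; first by rewrite cycle_relE eqxx.
by move=> y; rewrite cycle_relE => /orP[/eqP->|/eqP->]; rewrite ?eqxx.
Qed.

Lemma forces_cycle_ord_pred (B : {set 'I_n}) x :
  x \in B -> ordS x \in B -> ord_pred x \notin B ->
  forces (@cycle_rel n) B x (ord_pred x).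
Proof.
move=> xB sxB pxB; split=> //; first by rewrite cycle_relE eqxx orbT.
by move=> y; rewrite cycle_relE => /orP[/eqP->|/eqP->]; rewrite ?eqxx.
Qed.

Definition contains_cycle_edge (S : {set 'I_n}) := [exists x, (x \in S) && (ordS x \in S)].

End CycleOrder.

Section CycleWithChord.
Variables (n : nat) (u v : 'I_n) (e : rel 'I_n).
Hypotheses (n_gt2 : 2 < n) (cycle_sub : subrel (@cycle_rel n) e)
  (sub_add_edge : subrel e (add_edge (@cycle_rel n) u v)).

Lemma forces_contains_cycle_edge S x w : forces e S x w -> contains_cycle_edge S.
Proof.
case=> xS _ _ others; apply/existsP.
have [sxw|sxw] := eqVneq (ordS x) w.
  exists (ord_pred x); rewrite ord_predK xS andbT; apply: others.
    by apply: cycle_sub; rewrite cycle_relE eqxx orbT.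
  by rewrite -sxw eq_sym ordS_neq_ord_pred.
exists x; rewrite xS; apply: others sxw.
by apply: cycle_sub; rewrite cycle_relE eqxx.
Qed.

Lemma zero_forcing_contains_cycle_edge S :
  zero_forcing_set e S -> contains_cycle_edge S.
Proof.
case/zf_reach_first_force => [S_full|[x [w /forces_contains_cycle_edge//]]].
by apply/existsP; exists (Ordinal (ltnW (ltnW n_gt2))); rewrite -S_full !inE.
Qed.

Lemma contains_cycle_edge_forces B :
  contains_cycle_edge B -> B != setT -> exists x w, forces e B x w.
Proof.
case/existsP=> x xB; rewrite -subTset => /subsetPn[z _ zB].
pose blue_edge := [pred y | (y \in B) && (ordS y \in B)].
have nzB : ~~ blue_edge z by rewrite negb_and zB.
have [y /andP[yB syB] ssyB] := fconnect_exit (fconnect_ordS x z) xB nzB.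
rewrite /= syB /= in ssyB.
have nnxB : ~~ predC blue_edge x by rewrite /= negbK.
have [p /= pB /negPn/andP[spB sspB]] := fconnect_exit (fconnect_ordS z x) nzB nnxB.
rewrite spB andbT in pB.
have ys_neq_ps : ordS y != ordS p.
  by rewrite (inj_eq (@ordS_inj n)); apply: contraNneq pB => <-.
have /orP[partner_y|partner_p] := partner_in_either u v syB spB ys_neq_ps.
  exists (ordS y), (ordS (ordS y)); apply: (forces_add_edge cycle_sub sub_add_edge partner_y).
  by apply: forces_cycle_ordS; rewrite ?ordSK.
exists (ordS p), p; apply: (forces_add_edge cycle_sub sub_add_edge partner_p).
by rewrite -{2}(ordSK p); apply: forces_cycle_ord_pred; rewrite ?ordSK.
Qed.

Lemma zero_forcing_setP S : zero_forcing_set e S <-> contains_cycle_edge S.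
Proof.
split; first exact: zero_forcing_contains_cycle_edge.
apply: (zero_forcing_set_of_invariant (P := fun B => contains_cycle_edge B)).
move=> B BP /(contains_cycle_edge_forces BP)[x [w fxw]]; exists x, w; split=> //.
case/existsP: BP => y /andP[yB syB]; apply/existsP; exists y.
by rewrite !inE yB syB !orbT.
Qed.

End CycleWithChord.

Theorem proposition2p30 (n : nat) (u v : 'I_n) :
  4 <= n -> u != v -> ~~ cycle_rel u v ->
  (* same zero forcing sets *)
  (forall S : {set 'I_n},
      zero_forcing_set (@cycle_rel n) S <->
      zero_forcing_set (add_edge (@cycle_rel n) u v) S) /\
  (* hence Z^TAR(C_n) = Z^TAR(C_n + uv): same vertices and same edges *)
  (forall S : {set 'I_n},
      ZTAR_vertex (@cycle_rel n) S <-> ZTAR_vertex (add_edge (@cycle_rel n) u v) S) /\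
  (forall S1 S2 : {set 'I_n},
      ZTAR_adj (@cycle_rel n) S1 S2 <-> ZTAR_adj (add_edge (@cycle_rel n) u v) S1 S2).
Proof.
(* The characterisation holds for every extra edge. *)
move=> /ltnW n_gt2 _ _.
have cycle_sub_add_edge : subrel (@cycle_rel n) (add_edge (@cycle_rel n) u v).
  by move=> x y cxy; rewrite /add_edge cxy.
have same_zf S : zero_forcing_set (@cycle_rel n) S <->
                 zero_forcing_set (add_edge (@cycle_rel n) u v) S.
  rewrite (zero_forcing_setP n_gt2 (fun _ _ => id) cycle_sub_add_edge).
  by rewrite (zero_forcing_setP n_gt2 cycle_sub_add_edge (fun _ _ => id)).
split; first exact: same_zf.
split; first exact: same_zf.
by move=> S1 S2; split=> -[zf1 zf2 card12]; split=> //; apply/same_zf.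
Qed.
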